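(* Let $H$ be a fixed hypergraph on $m$ vertices $\{1,\dots,m\}$ and $s_1,\dots,s_m$ positive integers, and let $\delta=\frac{\max\{s_i:1\le i\le m\}}{\prod_{i=1}^m s_i}$. Then for sufficiently large $n$, every hypergraph $G$ on $n$ vertices with $R(G)=R(H)$ that contains no subgraph $H(s_1,\dots,s_m)$ satisfies $\mu_H(G)=O(n^{-\delta})$ (the implied constant depending only on $H$ and $s_1,\dots,s_m$).
   Context: A hypergraph $H=(V,E)$ has finite vertex set $V$ and edge set $E\subseteq 2^V$; $R(H)=\{|F|:F\in E\}$. $H_1\subseteq H_2$ (subgraph) means there is an injective $f\colon V(H_1)\to V(H_2)$ with $f(F)\in E(H_2)$ for all $F\in E(H_1)$. The density $\mu_H(G)$ of $H$ in $G$ (with $R(H)=R(G)$) is the probability that a uniformly random injective map $f\colon V(H)\to V(G)$ satisfies $f(F)\in E(G)$ for all $F\in E(H)$. The blowup $H(s_1,\dots,s_m)$ has vertex set $V_1\sqcup\dots\sqcup V_m$, $|V_i|=s_i$, and edge set $\bigcup_{F\in E(H)}\prod_{i\in F}V_i$. *)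

From mathcomp Require Import all_boot.
From Stdlib Require Import Reals.
Set Implicit Arguments. Unset Strict Implicit. Unset Printing Implicit Defensive.

(* A hypergraph on a finite vertex type V is given by its edge set E : {set {set V}}. *)

Definition in_ranks (V : finType) (E : {set {set V}}) (k : nat) : bool :=
  [exists F in E, #|F| == k].

Definition same_ranks (V1 V2 : finType) (E1 : {set {set V1}}) (E2 : {set {set V2}}) : Prop :=
  forall k : nat, in_ranks E1 k = in_ranks E2 k.

Definition subgraph (V1 V2 : finType) (E1 : {set {set V1}}) (E2 : {set {set V2}}) : Prop :=
  exists f : V1 -> V2, injective f /\ forall F, F \in E1 -> f @: F \in E2.

Definition blowV (m : nat) (s : 'I_m -> nat) : finType := {i : 'I_m & 'I_(s i)}.

(* Edges of the blowup: the union over F in E(H) of prod_{i in F} V_i,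
   a choice (x_i)_{i in F} being identified with the set {x_i : i in F}. *)
Definition blowup (m : nat) (s : 'I_m -> nat) (E : {set {set 'I_m}}) : {set {set blowV s}} :=
  [set X : {set blowV s} | [exists F in E,
      [exists g : {dffun forall i : 'I_m, 'I_(s i)},
            X == [set (Tagged (fun i => 'I_(s i)) (g i) : blowV s) | i in F]]]].

(* mu_H(G): probability that a uniformly random injective map V(H) -> V(G)
   sends every edge of H to an edge of G. *)
Definition inj_maps (m n : nat) : {set {ffun 'I_m -> 'I_n}} :=
  [set f : {ffun 'I_m -> 'I_n} | injectiveb f].

Definition hom_maps (m n : nat) (E : {set {set 'I_m}}) (EG : {set {set 'I_n}})
  : {set {ffun 'I_m -> 'I_n}} :=
  [set f in inj_maps m n | [forall F in E, (f @: F) \in EG]].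

Definition density (m n : nat) (E : {set {set 'I_m}}) (EG : {set {set 'I_n}}) : R :=
  (INR #|hom_maps E EG| / INR #|inj_maps m n|)%R.

Definition delta (m : nat) (s : 'I_m -> nat) : R :=
  (INR (\max_(i < m) s i) / INR (\prod_(i < m) s i))%R.

(* Let [j] be a vertex with [s_j] maximal and [P = \prod_(i != j) s_i], so
   that [delta = 1/P]. Hölder's inequality, applied once per vertex other
   than [j], bounds the [P]-th power of the number of homomorphisms [H -> G]
   by [n^(mP-1-M)] times the number of homomorphisms of the blowup
   [H(1, s_i : i != j)], where [M = \sum_(i != j) s_i]. If [G] has no [H(s)],
   then any choice of pairwise distinct blocks over the [i != j] extends over
   [j] in fewer than [s_j + M] ways, while blocks with a repeated vertex are a
   fraction [O(1/n)] of all choices. Hence [hom(H, G)^P = O(n^(mP - 1))],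
   i.e. [mu_H(G) = O(n^(-1/P))]. *)
From mathcomp Require Import all_boot zify.
From Stdlib Require Import Reals Lra.
(* [Reals] re-exports Peano's [^] on [nat]; restore the ssrnat notations. *)
Import ssrnat.
Set Implicit Arguments. Unset Strict Implicit. Unset Printing Implicit Defensive.

Lemma leq_exp2rW k x y : x <= y -> x ^ k <= y ^ k.
Proof. by case: k => [//|k] le_xy; rewrite leq_exp2r. Qed.

Lemma rearrangement_expn x y k : x * y ^ k + y * x ^ k <= x * x ^ k + y * y ^ k.
Proof.
wlog le_xy : x y / x <= y.
  by move=> sym; case: (leqP x y) => [/sym //|/ltnW /sym]; lia.
have := leq_exp2rW k le_xy; move: (x ^ k) (y ^ k) => a b; nia.
Qed.

Lemma chebyshev_expn (A : finType) (e : A -> nat) k :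
  (\sum_a e a) * (\sum_a e a ^ k) <= #|A| * \sum_a e a ^ k.+1.
Proof.
rewrite big_distrlr /=.
have -> : #|A| * \sum_a e a ^ k.+1 = \sum_a \sum_(b : A) e a ^ k.+1.
  by rewrite mulnC big_distrl; apply: eq_bigr => a _; rewrite sum_nat_const mulnC.
rewrite -(leq_pmul2l (isT : 0 < 2)) !mul2n -!addnn.
rewrite [X in _ + X <= _]exchange_big [X in _ <= _ + X]exchange_big /=.
rewrite -!big_split /=; apply: leq_sum => a _; rewrite -!big_split /=.
by apply: leq_sum => b _; rewrite !expnS; have := rearrangement_expn (e a) (e b) k; lia.
Qed.

Lemma jensen_expn (A : finType) (e : A -> nat) k :
  #|A| * (\sum_a e a) ^ k <= #|A| ^ k * \sum_a e a ^ k.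
Proof.
elim: k => [|k IH]; first by rewrite !expn0 mul1n sum_nat_const !muln1.
rewrite expnS mulnCA (leq_trans (leq_mul (leqnn _) IH)) //.
by rewrite mulnCA expnS (mulnC #|A|) -mulnA leq_mul // chebyshev_expn.
Qed.

Lemma prod_nat_bool (A : finType) (b : pred A) : \prod_a (b a : nat) = [forall a, b a].
Proof.
case: (boolP [forall a, b a]) => [/forallP ball | /forallPn [a /negbTE nba]].
  by rewrite big1 // => a _; rewrite ball.
by rewrite (bigD1 a) //= nba.
Qed.

Lemma sum_nat_bool (A : finType) (b : pred A) : \sum_a (b a : nat) = #|[set a | b a]|.
Proof. by rewrite -sum1_card [RHS]big_mkcond; apply: eq_bigr => a _; rewrite inE. Qed.

Lemma ffact_le_expn n k : n ^_ k <= n ^ k.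
Proof.
rewrite ffact_prod -[k in n ^ k]card_ord -prod_nat_const.
by apply: leq_prod => i _; apply: leq_subr.
Qed.

Lemma expnS_le_ffact n k : n ^ k.+1 <= n * n ^_ k + k * k * n ^ k.
Proof.
elim: k => [|k IH]; first by rewrite ffactn0 expn1 muln1 leq_addr.
rewrite ffactnSr [n ^ k.+2]expnS [n ^ k.+1]expnS.
have [le_kn | lt_nk] := leqP k n; last first.
  by rewrite ffact_small // mul0n muln0 add0n leq_mul // (leq_trans (leqW (ltnW lt_nk))) ?leq_pmull.
rewrite expnS in IH; have le_Fa := ffact_le_expn n k.
have h1 := leq_mul (leqnn n) IH; have h2 := leq_mul (leq_mul (leqnn n) le_Fa) (leqnn k).
rewrite -(subnK le_kn) in h1 h2 *; nia.
Qed.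

Lemma expn_le_ffact n k : 2 * k <= n -> n ^ k <= 2 ^ k * n ^_ k.
Proof.
elim: k => [|k IH] le_kn; first by rewrite ffactn0.
rewrite ffactnSr !expnS.
have := IH (leq_trans (leq_mul (leqnn 2) (leqnSn k)) le_kn).
have : n <= 2 * (n - k) by lia.
move: (n ^ k) (2 ^ k) (n ^_ k) (n - k) => a b c d le_n le_a.
by rewrite mulnC (leq_trans (leq_mul le_a le_n)) //; lia.
Qed.

Section BlowupSums.
Variable X : finType.
Local Notation N := #|X|.

Fixpoint sum_words (k : nat) (f : seq X -> nat) : nat :=
  if k is k'.+1 then \sum_x sum_words k' (fun y => f (x :: y)) else f [::].

Lemma eq_sum_words k (f g : seq X -> nat) : f =1 g -> sum_words k f = sum_words k g.
Proof.
elim: k f g => [|k IH] f g fg /=; first exact: fg.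
by apply: eq_bigr => x _; apply: IH.
Qed.

Lemma sum_words_sum (I : finType) k (g : I -> seq X -> nat) :
  sum_words k (fun y => \sum_i g i y) = \sum_i sum_words k (g i).
Proof.
elim: k g => [//|k IH] g /=.
by under eq_bigr => x _ do rewrite IH; rewrite exchange_big.
Qed.

Lemma sum_words_jensen k (h : seq X -> nat) e :
  N ^ k * sum_words k h ^ e <= N ^ (k * e) * sum_words k (fun y => h y ^ e).
Proof.
elim: k h => [|k IH] h /=; first by rewrite !mul1n.
rewrite expnS (mulnC N) -mulnA (leq_trans (leq_mul (leqnn _) (jensen_expn _ _))) //.
rewrite mulnCA mulSn expnD -mulnA leq_mul2l !big_distrr /=; apply/orP; right.
by apply: leq_sum => x _; apply: IH.
Qed.

Lemma sum_words_ge (A : finType) k (P : pred A) (rho : A -> seq X) (f : seq X -> nat) :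
  {in P &, injective rho} -> (forall a, P a -> size (rho a) = k) ->
  \sum_(a | P a) f (rho a) <= sum_words k f.
Proof.
elim: k A P rho f => [|k IH] A P rho f rho_inj rho_size.
  case: (pickP P) => [a Pa | P0]; last by rewrite big_pred0.
  have rhoE b : P b -> rho b = [::] by move/rho_size/size0nil.
  rewrite (big_pred1 a) /= ?rhoE // => b.
  by apply/idP/eqP => [Pb | -> //]; apply: rho_inj; rewrite ?rhoE.
case: (pickP P) => [a Pa | P0]; last by rewrite big_pred0.
have [x0 _] : exists x0 : X, True.
  by move: (rho_size _ Pa); case: (rho a) => [//|x0 _ _]; exists x0.
rewrite (partition_big (fun a => head x0 (rho a)) predT) //=; apply: leq_sum => x _.
have rhoE b : P b && (head x0 (rho b) == x) -> rho b = x :: behead (rho b).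
  by case/andP=> /rho_size; case: (rho b) => //= ? ? _ /eqP ->.
rewrite (eq_bigr (fun b => f (x :: behead (rho b)))) => [|b /rhoE <- //].
apply: (IH _ _ (fun b => behead (rho b)) (fun y => f (x :: y))).
  move=> b c Pb Pc Ebc; apply: rho_inj; [by case/andP: Pb | by case/andP: Pc |].
  by rewrite (rhoE _ Pb) (rhoE _ Pc) Ebc.
by move=> b /andP [/rho_size Sb _]; rewrite size_behead Sb.
Qed.

Lemma sum_ffun_prod k (h : X -> nat) :
  \sum_(z : {ffun 'I_k -> X}) \prod_(i < k) h (z i) = (\sum_x h x) ^ k.
Proof.
rewrite -(bigA_distr_bigA (fun (_ : 'I_k) x => h x)) /=.
by rewrite prod_nat_const card_ord.
Qed.

(* A [blocks t] puts [t_p] points of [X] over the [p]-th letter of a word of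
   length [size t], a [picks t] selects one of them over each letter: the
   words read off are those of a complete [size t]-partite blowup. *)
Fixpoint blocks (t : seq nat) : finType :=
  if t is t0 :: t' then ({ffun 'I_t0 -> X} * blocks t')%type else unit.

Fixpoint picks (t : seq nat) : finType :=
  if t is t0 :: t' then ('I_t0 * picks t')%type else unit.

Fixpoint read (t : seq nat) : blocks t -> picks t -> seq X :=
  match t with
  | [::] => fun _ _ => [::]
  | t0 :: t' => fun Z G => Z.1 G.1 :: read Z.2 G.2
  end.

Definition blowup_sum (t : seq nat) (f : seq X -> nat) : nat :=
  \sum_(Z : blocks t) \prod_(G : picks t) f (read Z G).

Lemma card_blocks t : #|blocks t| = N ^ sumn t.
Proof.
elim: t => [|t0 t IH] /=; first by rewrite card_unit.
by rewrite card_prod IH card_ffun card_ord expnD.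
Qed.

Lemma blowup_sum_nil f : blowup_sum [::] f = f [::].
Proof. by rewrite /blowup_sum (big_pred1 tt) // (big_pred1 tt) //; case. Qed.

Lemma blowup_sum_cons t0 t f : blowup_sum (t0 :: t) f =
  \sum_(z : {ffun 'I_t0 -> X}) blowup_sum t (fun y => \prod_(i < t0) f (z i :: y)).
Proof.
rewrite /blowup_sum -(pair_bigA _ (fun z (Z : blocks t) =>
   \prod_(G : picks (t0 :: t)) f (read (t := t0 :: t) (z, Z) G))).
apply: eq_bigr => z _; apply: eq_bigr => Z _.
by rewrite -(pair_bigA _ (fun i G => f (read (t := t0 :: t) (z, Z) (i, G)))) exchange_big.
Qed.

Lemma blowup_sum_one t f : blowup_sum (1 :: t) f =
  \sum_(Z : blocks t) \sum_x \prod_(G : picks t) f (x :: read Z G).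
Proof.
rewrite blowup_sum_cons /blowup_sum exchange_big; apply: eq_bigr => Z _.
rewrite -[RHS]expn1 -(sum_ffun_prod 1 (fun x => \prod_(G : picks t) f (x :: read Z G))).
by apply: eq_bigr => z _; rewrite exchange_big.
Qed.

(* Iterated Hölder: on average, [f] to the power [\prod t] is dominated by
   the product of [f] over all words of a random blowup of shape [t]. *)
Theorem blowup_sum_ge t f : 0 < N ->
  N ^ sumn t * sum_words (size t) f ^ (\prod_(x <- t) x)
  <= N ^ (size t * \prod_(x <- t) x) * blowup_sum t f.
Proof.
move=> N_gt0; elim: t f => [|t0 t IH] f.
  by rewrite blowup_sum_nil big_nil /= !mul1n expn1.
rewrite blowup_sum_cons big_cons /=.
set m := size t; set P := \prod_(x <- t) x.
pose fz (z : {ffun 'I_t0 -> X}) y := \prod_(i < t0) f (z i :: y).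
set A := \sum_z sum_words m (fz z).
set B := \sum_z blowup_sum t (fz z).
have first_letter : N ^ m * sum_words m.+1 f ^ t0 <= N ^ (m * t0) * A.
  have -> : A = sum_words m (fun y => (\sum_x f (x :: y)) ^ t0).
    rewrite /A -sum_words_sum; apply: eq_sum_words => y.
    by rewrite -(sum_ffun_prod t0 (fun x => f (x :: y))).
  by rewrite /= -sum_words_sum; apply: sum_words_jensen.
have over_blocks : N ^ t0 * A ^ P <= (N ^ t0) ^ P * \sum_z sum_words m (fz z) ^ P.
  by have := jensen_expn (fun z => sum_words m (fz z)) P; rewrite card_ffun !card_ord.
have other_letters : N ^ sumn t * \sum_z sum_words m (fz z) ^ P
                     <= N ^ (m * P) * B.
  by rewrite !big_distrr /=; apply: leq_sum => z _; apply: IH.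
have := leq_exp2rW P first_letter; rewrite !expnMn -!expnM => first_letterP.
rewrite -(leq_pmul2l (_ : 0 < N ^ (m * P))) ?expn_gt0 ?N_gt0 //.
rewrite -/(sum_words m.+1 f) mulSn !expnD (mulnA m t0 P).
move: first_letterP over_blocks other_letters; rewrite -expnM.
move: (N ^ _) (N ^ t0) (N ^ sumn t) (N ^ (m * t0 * P)) (N ^ (t0 * P)) => a b c d e.
move: (sum_words m.+1 f ^ _) (A ^ P) (\sum_z _ ^ P) B => x y u v h1 h2 h3.
have k1 : b * c * (a * x) <= b * c * (d * y) by apply: leq_mul.
have k2 : c * d * (b * y) <= c * d * (e * u) by apply: leq_mul.
have k3 : d * e * (c * u) <= d * e * (a * v) by apply: leq_mul.
lia.
Qed.

End BlowupSums.

Section Entries.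
Variables (X : finType) (x0 : X).
Local Notation N := #|X|.

Fixpoint entries (t : seq nat) : blocks X t -> seq X :=
  match t with
  | [::] => fun _ => [::]
  | t0 :: t' => fun Z => codom Z.1 ++ entries Z.2
  end.

Definition entry t (Z : blocks X t) p c := nth x0 (entries Z) (flatten_index t p c).

Fixpoint pick_index (t : seq nat) : picks t -> nat -> nat :=
  match t with
  | [::] => fun _ _ => 0
  | t0 :: t' => fun G p => if p is p'.+1 then pick_index G.2 p' else val G.1
  end.

Lemma size_entries t (Z : blocks X t) : size (entries Z) = sumn t.
Proof. by elim: t Z => [//|t0 t IH] [z Z] /=; rewrite size_cat size_codom card_ord IH. Qed.

Lemma nth_codom_ord k (z : {ffun 'I_k -> X}) (i : 'I_k) : nth x0 (codom z) i = z i.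
Proof. by rewrite codomE (nth_map i) ?size_enum_ord // nth_ord_enum. Qed.

Lemma nth_read t (Z : blocks X t) G p : p < size t ->
  nth x0 (read Z G) p = entry Z p (pick_index G p).
Proof.
rewrite /entry /flatten_index.
elim: t Z G p => [//|t0 t IH] [z Z] [g G] [|p] /= lt_p.
  by rewrite nth_cat size_codom card_ord ltn_ord nth_codom_ord.
by rewrite IH // nth_cat size_codom card_ord -addnA ltnNge leq_addr /= addKn.
Qed.

Lemma entry_mem t (Z : blocks X t) p c : c < nth 0 t p -> entry Z p c \in entries Z.
Proof. by move=> lt_c; rewrite mem_nth // size_entries flatten_indexP. Qed.

Lemma exists_pick t (g : nat -> nat) :
  (forall p, p < size t -> g p < nth 0 t p) ->
  exists G : picks t, forall p, p < size t -> pick_index G p = g p.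
Proof.
elim: t g => [|t0 t IH] g lt_g; first by exists tt.
have [G GE] := IH (fun p => g p.+1) (fun p => lt_g p.+1).
by exists (Ordinal (lt_g 0 isT), G) => [[|p]] //= /GE.
Qed.

Lemma entries_inj t : injective (@entries t).
Proof.
elim: t => [|t0 t IH] /=; first by do 2!case.
move=> [z Z] [z' Z'] /= /eqP; rewrite eqseq_cat ?size_codom //.
case/andP=> /eqP Ez /eqP /IH ->; congr pair.
by apply/ffunP => i; rewrite -!nth_codom_ord Ez.
Qed.

Lemma card_nonuniq_entries t :
  N * #|[set Z : blocks X t | ~~ uniq (entries Z)]| <= sumn t * sumn t * N ^ sumn t.
Proof.
set M := sumn t.
pose flat (Z : blocks X t) : {ffun 'I_M -> X} := [ffun i : 'I_M => nth x0 (entries Z) i].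
have codom_flat (Z : blocks X t) : codom (flat Z) = entries Z.
  rewrite codomE -[RHS](mkseq_nth x0) size_entries /mkseq -val_enum_ord -map_comp.
  by apply: eq_map => i; rewrite /= ffunE.
have flat_inj : injective flat.
  by move=> Z Z' eqZ; apply: entries_inj; rewrite -!codom_flat eqZ.
have le_noninj : #|[set Z : blocks X t | ~~ uniq (entries Z)]|
                 <= #|[set phi : {ffun 'I_M -> X} | ~~ injectiveb phi]|.
  rewrite -(card_imset _ flat_inj).
  apply/subset_leq_card/subsetP => phi /imsetP [Z].
  by rewrite !inE => nuZ ->; rewrite /injectiveb /dinjectiveb -codomE codom_flat.
have card_noninj : #|[set phi : {ffun 'I_M -> X} | ~~ injectiveb phi]| + N ^_ M = N ^ M.
  have -> : [set phi : {ffun 'I_M -> X} | ~~ injectiveb phi]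
            = ~: [set phi : {ffun 'I_M -> X} | injectiveb phi].
    by apply/setP => phi; rewrite !inE.
  by rewrite -[M in N ^_ M]card_ord -card_inj_ffuns addnC cardsC card_ffun card_ord.
have := expnS_le_ffact N M; rewrite expnS; nia.
Qed.

End Entries.

Section Extensions.
Variables (m : nat) (E : {set {set 'I_m}}) (s : 'I_m -> nat) (n : nat)
  (EG : {set {set 'I_n}}) (j : 'I_m) (x0 : 'I_n).

(* Words encode vertex maps 'I_m -> 'I_n: the first letter is the image of
   [j], the others those of the remaining vertices in the order of [others]. *)
Definition others : seq 'I_m := enum [pred i | i != j].
Definition other_sizes : seq nat := map s others.

Definition hom_word (y : seq 'I_n) : bool :=
  [forall F in E, [set nth x0 y (index i (j :: others)) | i in F] \in EG].

Lemma mem_others i : (i \in others) = (i != j).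
Proof. by rewrite mem_enum inE. Qed.

Lemma size_others : (size others).+1 = m.
Proof. by rewrite -cardE cardC1 card_ord; case: m j => [[]|]. Qed.

Lemma index_others i (c : 'I_(s i)) : i != j ->
  index i others < size other_sizes /\ c < nth 0 other_sizes (index i others).
Proof.
move=> nij; rewrite size_map index_mem mem_others nij.
by rewrite (nth_map j) ?index_mem ?mem_others // nth_index ?mem_others.
Qed.

Definition blowup_map (ws : seq 'I_n) (Z : blocks 'I_n other_sizes) (u : blowV s) : 'I_n :=
  if tag u == j then nth x0 ws (tagged u)
  else entry x0 Z (index (tag u) others) (tagged u).

Section Embedding.
Variables (ws : seq 'I_n) (Z : blocks 'I_n other_sizes).

Lemma blowup_map_inj : uniq ws -> s j <= size ws -> uniq (entries Z) ->
  {in ws, forall w, w \notin entries Z} -> injective (blowup_map ws Z).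
Proof.
move=> uws Sws uZ fresh [i c] [i' c']; rewrite /blowup_map /=.
have nth_fresh (c0 : 'I_(s j)) : nth x0 ws c0 \notin entries Z.
  by apply: fresh; rewrite mem_nth // (leq_trans _ Sws).
have [Eij | nij] := eqVneq i j; have [Eij' | nij'] := eqVneq i' j;
  try subst i; try subst i'; rewrite ?eqxx ?(negbTE nij) ?(negbTE nij').
- by move/eqP; rewrite nth_uniq ?(leq_trans _ Sws) // => /eqP/val_inj ->.
- have [_ lt_c'] := index_others c' nij'.
  by move=> Ecc'; move: (nth_fresh c); rewrite Ecc' entry_mem.
- have [_ lt_c] := index_others c nij.
  by move=> Ecc'; move: (nth_fresh c'); rewrite -Ecc' entry_mem.
have [lt_i lt_c] := index_others c nij; have [lt_i' lt_c'] := index_others c' nij'.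
move/eqP; rewrite /entry nth_uniq ?size_entries ?flatten_indexP // => /eqP Ecc'.
have Eii : index i others = index i' others.
  by rewrite -(flatten_indexKl lt_c) Ecc' flatten_indexKl.
have Ecc : c = c' :> nat.
  by rewrite -(flatten_indexKr lt_c) Ecc' flatten_indexKr.
move: c c' Ecc {lt_c lt_c' Ecc'}; have -> : i' = i.
  by rewrite -(nth_index j (_ : i \in others)) ?mem_others // Eii nth_index ?mem_others.
by move=> c c' /val_inj ->.
Qed.

Lemma blowup_map_edges :
  (forall (c : 'I_(s j)) (G : picks other_sizes), hom_word (nth x0 ws c :: read Z G)) ->
  forall B, B \in blowup s E -> blowup_map ws Z @: B \in EG.
Proof.
move=> ws_hom B; rewrite inE => /existsP [F /andP [FE /existsP [g /eqP ->]]].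
rewrite -imset_comp.
have lt_g p : p < size other_sizes -> g (nth j others p) < nth 0 other_sizes p.
  by rewrite size_map => lt_p; rewrite (nth_map j).
have [G GE] := exists_pick lt_g.
have /forallP/(_ F) := ws_hom (g j) G; rewrite FE /=.
congr (_ \in EG); apply: eq_imset => i /=; rewrite /blowup_map /=.
have [-> // | nij] := eqVneq i j.
have [lt_i _] := index_others (g i) nij.
by rewrite /= nth_read ?GE // nth_index ?mem_others.
Qed.

End Embedding.

Hypothesis blowup_free : ~ subgraph (blowup s E) EG.

(* Otherwise [s_j] such vertices outside the entries of [Z], together with
   [Z], would carry a copy of [H(s)]. *)
Lemma card_extensions_lt (Z : blocks 'I_n other_sizes) : uniq (entries Z) ->
  #|[set w | [forall G, hom_word (w :: read Z G)]]| < s j + sumn other_sizes.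
Proof.
move=> uZ; rewrite ltnNge; apply/negP => le_card; apply: blowup_free.
set Good := [set w | _] in le_card.
set ws := enum (Good :\: [set w | w \in entries Z]).
have le_ws : s j <= size ws.
  rewrite -cardE -(leq_add2r (sumn other_sizes)) (leq_trans le_card) //.
  rewrite -(cardsID [set w | w \in entries Z] Good) addnC leq_add2l.
  rewrite -(size_entries Z) (leq_trans _ (card_size _)) //.
  by apply/subset_leq_card/subsetP => w; rewrite !inE => /andP [].
exists (blowup_map ws Z); split.
  apply: blowup_map_inj; rewrite ?enum_uniq //.
  by move=> w; rewrite mem_enum !inE => /andP [].
apply: blowup_map_edges => c G.
have : nth x0 ws c \in ws by rewrite mem_nth // (leq_trans _ le_ws).
by rewrite mem_enum !inE => /andP [_ /forallP].
Qed.

Lemma blowup_sum_hom_le : blowup_sum (1 :: other_sizes) hom_word <=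
  n ^ sumn other_sizes * (s j + sumn other_sizes + sumn other_sizes * sumn other_sizes).
Proof.
set M := sumn other_sizes; rewrite blowup_sum_one.
apply: (@leq_trans (\sum_(Z : blocks 'I_n other_sizes)
                       (s j + M + n * ~~ uniq (entries Z)))).
  apply: leq_sum => Z _.
  under eq_bigr => w _ do rewrite prod_nat_bool; rewrite sum_nat_bool.
  case: (boolP (uniq (entries Z))) => uZ.
    by rewrite muln0 addn0 ltnW // card_extensions_lt.
  by rewrite muln1 (leq_trans _ (leq_addl _ _)) // -[n in _ <= n]card_ord max_card.
rewrite big_split /= sum_nat_const card_blocks card_ord -/M -big_distrr /= !mulnDr leq_add2l.
rewrite sum_nat_bool.
by have := card_nonuniq_entries x0 other_sizes; rewrite card_ord [_ * n ^ M]mulnC.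
Qed.

End Extensions.

Lemma card_inj_maps m n : #|inj_maps m n| = n ^_ m.
Proof. by rewrite card_inj_ffuns !card_ord. Qed.

Section HomCount.
Variables (m : nat) (E : {set {set 'I_m}}) (s : 'I_m -> nat) (n : nat)
  (EG : {set {set 'I_n}}) (j : 'I_m) (x0 : 'I_n).

Lemma card_hom_maps_le : #|hom_maps E EG| <= sum_words m (hom_word E EG j x0).
Proof.
pose word (phi : {ffun 'I_m -> 'I_n}) := map phi (j :: others j).
have nth_word phi i : nth x0 (word phi) (index i (j :: others j)) = phi i.
  have i_in : i \in j :: others j by rewrite in_cons mem_others; case: (i == j).
  by rewrite (nth_map j) ?index_mem // nth_index.
rewrite -sum1_card.
apply: (leq_trans _ (sum_words_ge (P := mem (hom_maps E EG)) (rho := word) _ _ _)).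
- apply: leq_sum => phi; rewrite inE => /andP [_ /forallP phi_hom].
  rewrite lt0b; apply/forallP => F; apply/implyP => FE.
  by have := implyP (phi_hom F) FE; rewrite (eq_imset _ (nth_word phi)).
- move=> phi phi' _ _ Ew.
  by apply/ffunP => i; rewrite -(nth_word phi) -(nth_word phi') Ew.
- by move=> phi _; rewrite size_map /= size_others.
Qed.

Hypothesis blowup_free : ~ subgraph (blowup s E) EG.

Lemma hom_maps_pow_le (P := \prod_(x <- other_sizes s j) x)
    (M := sumn (other_sizes s j)) :
  2 * m <= n ->
  n * #|hom_maps E EG| ^ P <= (s j + M + M * M) * 2 ^ (m * P) * #|inj_maps m n| ^ P.
Proof.
move=> le_mn; have n_gt0 : 0 < n by case: (n) x0 => [[]|].
have := @blowup_sum_ge _ (1 :: other_sizes s j) (hom_word E EG j x0).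
rewrite card_ord => /(_ n_gt0).
rewrite [size _]/= [sumn _]/= size_map size_others big_cons mul1n -/P -/M => lower.
have upper := blowup_sum_hom_le j x0 blowup_free.
have homP := leq_exp2rW P card_hom_maps_le.
have : n ^ M * (n * #|hom_maps E EG| ^ P) <= n ^ M * (n ^ (m * P) * (s j + M + M * M)).
  rewrite mulnA -expnSr -addn1 addnC (leq_trans (leq_mul (leqnn _) homP)) //.
  by rewrite (leq_trans lower) // mulnCA leq_mul2l upper orbT.
rewrite leq_pmul2l ?expn_gt0 ?n_gt0 // => /leq_trans; apply.
rewrite mulnC -mulnA leq_mul2l card_inj_maps !expnM -expnMn.
by rewrite leq_exp2rW ?orbT // expn_le_ffact.
Qed.

End HomCount.

Lemma expnE a b : a ^ b = Nat.pow a b.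
Proof. by elim: b => [//|b IH]; rewrite expnS IH. Qed.

Section RealBounds.
Local Open Scope R_scope.

Lemma ratio_le_Rpower (h D n C P : nat) :
  (0 < D)%N -> (0 < n)%N -> (0 < P)%N -> (0 < C)%N -> (n * h ^ P <= C * D ^ P)%N ->
  INR h / INR D <= Rpower (INR C) (/ INR P) * Rpower (INR n) (- / INR P).
Proof.
move=> /ltP/lt_0_INR D_gt0 /ltP/lt_0_INR n_gt0 /ltP/lt_0_INR P_gt0 /ltP/lt_0_INR C_gt0.
move=> /leP/le_INR; rewrite !mult_INR !expnE !pow_INR => le_hD.
have [-> | /ltP/lt_0_INR h_gt0] := posnP h.
  rewrite /Rdiv Rmult_0_l; apply: Rlt_le; apply: Rmult_lt_0_compat; apply: exp_pos.
set r := INR h / INR D.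
have r_gt0 : 0 < r by apply: Rdiv_lt_0_compat.
have rP : r ^ P <= INR C / INR n.
  rewrite /r /Rdiv Rpow_mult_distr pow_inv.
  have DP_gt0 : 0 < INR D ^ P by apply: pow_lt.
  apply: (Rmult_le_reg_r (INR D ^ P * INR n)); first exact: Rmult_lt_0_compat.
  by field_simplify; lra.
have -> : r = Rpower (r ^ P) (/ INR P).
  by rewrite -Rpower_pow // Rpower_mult Rinv_r ?Rpower_1 //; lra.
apply: Rle_trans (Rle_Rpower_l _ _ _ _ (conj (pow_lt _ _ r_gt0) rP)) _.
  by apply: Rlt_le; apply: Rinv_0_lt_compat.
rewrite /Rdiv -Rpower_mult_distr //; last exact: Rinv_0_lt_compat.
by apply: Req_le; congr Rmult; rewrite /Rpower ln_Rinv //; congr exp; ring.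
Qed.

End RealBounds.

Lemma prod_other_sizes m (s : 'I_m -> nat) j :
  \prod_(x <- other_sizes s j) x = \prod_(i | i != j) s i.
Proof. by rewrite big_map /others big_enum. Qed.

Lemma delta_argmax m (s : 'I_m -> nat) j :
  (forall i, 0 < s i) -> (forall i, s i <= s j) ->
  delta s = (/ INR (\prod_(x <- other_sizes s j) x))%R.
Proof.
move=> s_gt0 s_le; rewrite /delta prod_other_sizes.
have -> : \max_(i < m) s i = s j.
  by apply/eqP; rewrite eqn_leq leq_bigmax andbT; apply/bigmax_leqP => i _.
rewrite (bigD1 j) //= mult_INR; field.
by split; apply/not_0_INR/eqP; rewrite -lt0n ?prodn_gt0.
Qed.

Lemma density_le1 m n (E : {set {set 'I_m}}) (EG : {set {set 'I_n}}) :
  (density E EG <= 1)%R.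
Proof.
rewrite /density; have /leP/le_INR le_hom : #|hom_maps E EG| <= #|inj_maps m n|.
  by apply/subset_leq_card/subsetP => f; rewrite inE => /andP [].
have [-> | /ltP/lt_0_INR inj_gt0] := posnP #|inj_maps m n|.
  by rewrite /Rdiv Rinv_0 Rmult_0_r; lra.
apply: (Rmult_le_reg_r (INR #|inj_maps m n|)) => //.
by rewrite /Rdiv Rmult_assoc Rinv_l ?Rmult_1_r ?Rmult_1_l //; lra.
Qed.

Theorem mainTheorem16 (m : nat) (E : {set {set 'I_m}}) (s : 'I_m -> nat) :
  (forall i, 0 < s i) ->
  exists C : R, (0 < C)%R /\ exists N : nat, forall n : nat, N <= n ->
    forall EG : {set {set 'I_n}},
      same_ranks E EG ->
      ~ subgraph (blowup s E) EG ->
      (density E EG <= C * Rpower (INR n) (- delta s))%R.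
Proof.
case: m E s => [|m] E s s_gt0.
  exists 1%R; split; first lra; exists 0 => n _ EG _ _.
  rewrite /delta big_ord0 /Rdiv Rmult_0_l Ropp_0 /Rpower Rmult_0_l exp_0 Rmult_1_l.
  exact: density_le1.
pose j := [arg max_(i > ord0) s i].
have s_le i : s i <= s j by rewrite /j; case: arg_maxnP => // k _; apply.
set P := \prod_(x <- other_sizes s j) x; set M := sumn (other_sizes s j).
have P_gt0 : 0 < P by rewrite /P prod_other_sizes prodn_gt0.
exists (Rpower (INR ((s j + M + M * M) * 2 ^ (m.+1 * P))) (/ INR P)).
split; first exact: exp_pos.
exists (2 * m.+1) => n le_mn EG _ blowup_free.
have n_gt0 : 0 < n by apply: leq_trans le_mn.
rewrite (delta_argmax s_gt0 s_le) /density; apply: ratio_le_Rpower => //.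
- by rewrite card_inj_maps ffact_gt0 (leq_trans _ le_mn) // leq_pmull.
- by rewrite !muln_gt0 !addn_gt0 s_gt0 expn_gt0.
exact: hom_maps_pow_le (Ordinal n_gt0) blowup_free le_mn.
Qed.
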